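(* Let $M$ be a self-similar right $R$-module. Then $M$ is quasi-pseudo principally injective if and only if $M$ is semisimple.
   Context: All rings are associative with identity and all modules are unitary right $R$-modules. A submodule $N$ of $M$ is called $M$-cyclic if $N\cong M/L$ for some submodule $L$ of $M$ (equivalently, $N$ is the image of an endomorphism of $M$). $M$ is quasi-pseudo principally injective if for every $M$-cyclic submodule $A$ of $M$, every $R$-monomorphism $A\to M$ extends to an $R$-endomorphism of $M$. A module $M$ is self-similar if every nonzero submodule of $M$ is isomorphic to $M$. A module is semisimple if every submodule is a direct summand. *)

(* Right R-modules are modelled as left modules over the
   converse ring R^c (lmodType R^c). *)
From HB Require Import structures.
From mathcomp Require Import all_boot all_order all_algebra.
Set Implicit Arguments. Unset Strict Implicit. Unset Printing Implicit Defensive.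
Import GRing.Theory.
Local Open Scope ring_scope.

Section ModDefs.
Variables (R : pzRingType) (M : lmodType R^c).

Definition is_submodule (N : M -> Prop) : Prop :=
  [/\ N 0, (forall x y, N x -> N y -> N (x + y))
         & (forall (r : R^c) x, N x -> N (r *: x))].

Definition is_endo (f : M -> M) : Prop :=
  (forall x y, f (x + y) = f x + f y) /\
  (forall (r : R^c) x, f (r *: x) = r *: f x).

Definition is_hom_on (A : M -> Prop) (f : M -> M) : Prop :=
  (forall x y, A x -> A y -> f (x + y) = f x + f y) /\
  (forall (r : R^c) x, A x -> f (r *: x) = r *: f x).

Definition is_mono_on (A : M -> Prop) (f : M -> M) : Prop :=
  is_hom_on A f /\ (forall x y, A x -> A y -> f x = f y -> x = y).

Definition is_image (g : M -> M) (N : M -> Prop) : Prop :=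
  forall x, N x <-> exists y, x = g y.

Definition M_cyclic (A : M -> Prop) : Prop :=
  is_submodule A /\ exists g, is_endo g /\ is_image g A.

Definition quasi_pseudo_principally_injective : Prop :=
  forall A : M -> Prop, M_cyclic A ->
  forall f : M -> M, is_mono_on A f ->
  exists g : M -> M, is_endo g /\ (forall x, A x -> g x = f x).

Definition iso_to_M (N : M -> Prop) : Prop :=
  exists f : M -> M, [/\ is_endo f, injective f & is_image f N].

Definition self_similar : Prop :=
  forall N : M -> Prop, is_submodule N -> (exists x, N x /\ x <> 0) -> iso_to_M N.

Definition semisimple : Prop :=
  forall N : M -> Prop, is_submodule N ->
  exists K : M -> Prop, [/\ is_submodule K,
     (forall x, N x -> K x -> x = 0)
   & (forall x, exists a b, [/\ N a, K b & x = a + b])].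

End ModDefs.

From HB Require Import structures.
From mathcomp Require Import all_boot all_order all_algebra.
From Stdlib Require Import Classical IndefiniteDescription.
Set Implicit Arguments. Unset Strict Implicit. Unset Printing Implicit Defensive.
Import GRing.Theory.
Local Open Scope ring_scope.

(* A semisimple module has a projection onto every submodule, so any
   homomorphism defined on a submodule extends to an endomorphism; in
   particular M is quasi-pseudo principally injective.  Conversely, if N is a
   nonzero submodule of a self-similar M, some monomorphism h : M -> M has
   image N; N is then M-cyclic, so the inverse N -> M of h extends to an
   endomorphism g with g \o h = id, and ker g is a complement of N. *)

Section SubmoduleComplements.
Variables (R : pzRingType) (M : lmodType R^c).

Definition complemented (N : M -> Prop) : Prop :=
  exists K : M -> Prop, [/\ is_submodule K,
     (forall x, N x -> K x -> x = 0)
   & (forall x, exists a b, [/\ N a, K b & x = a + b])].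

Lemma submoduleN (N : M -> Prop) x : is_submodule N -> N x -> N (- x).
Proof. by move=> [_ _ NZ] Nx; rewrite -scaleN1r; apply: NZ. Qed.

Lemma submoduleB (N : M -> Prop) x y : is_submodule N -> N x -> N y -> N (x - y).
Proof. by move=> HN Nx Ny; case: (HN) => _ ND _; apply: ND => //; apply: submoduleN. Qed.

Lemma endo0 (f : M -> M) : is_endo f -> f 0 = 0.
Proof. by move=> [fD _]; apply: (addIr (f 0)); rewrite -fD !add0r. Qed.

Lemma endoN (f : M -> M) x : is_endo f -> f (- x) = - f x.
Proof. by move=> fE; apply: (addIr (f x)); rewrite -fE.1 !addNr endo0. Qed.

Lemma kernel_submodule (f : M -> M) : is_endo f -> is_submodule (fun x => f x = 0).
Proof.
move=> fE; have [fD fZ] := fE; split; first exact: endo0 fE.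
- by move=> x y fx fy; rewrite fD fx fy addr0.
- by move=> r x fx; rewrite fZ fx scaler0.
Qed.

Lemma zero_submodule_complemented (N : M -> Prop) : is_submodule N ->
  ~ (exists x, N x /\ x <> 0) ->
  complemented N.
Proof.
move=> [N0 _ _] N_eq0; rewrite /complemented; exists (fun _ => True); split => //.
- by move=> x Nx _; apply: NNPP => x_neq0; apply: N_eq0; exists x.
- by move=> x; exists 0, x; rewrite add0r.
Qed.

Lemma image_submodule (h : M -> M) (N : M -> Prop) :
  is_endo h -> is_image h N -> is_submodule N.
Proof.
move=> hE imgN; have [hD hZ] := hE; split.
- by apply/imgN; exists 0; rewrite endo0.
- move=> x y /imgN[u ->] /imgN[v ->]; apply/imgN; exists (u + v); exact/esym/hD.
- by move=> r x /imgN[u ->]; apply/imgN; exists (r *: u); rewrite hZ.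
Qed.

Section DirectSum.
Variables N K : M -> Prop.
Hypotheses (HN : is_submodule N) (HK : is_submodule K).
Hypothesis disjointNK : forall x, N x -> K x -> x = 0.
Hypothesis spanNK : forall x, exists a b, [/\ N a, K b & x = a + b].

Lemma direct_sum_component_unique a b a' b' :
  N a -> K b -> N a' -> K b' -> a + b = a' + b' -> a = a'.
Proof.
move=> Na Kb Na' Kb' eq_ab; apply/eqP; rewrite -subr_eq0; apply/eqP.
apply: disjointNK; first exact: submoduleB.
have -> : a - a' = b' - b.
  by apply: (addIr (a' + b)); rewrite addrA subrK addrCA subrK.
exact: submoduleB.
Qed.

Lemma direct_summand_projection :
  exists p : M -> M, [/\ is_endo p, forall x, N (p x) & forall x, N x -> p x = x].
Proof.
have [p pP] := functional_choice _ spanNK.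
have p_eq x a b : N a -> K b -> x = a + b -> p x = a.
  move=> Na Kb ->; have [b' [Np Kb' eq_ab]] := pP (a + b).
  exact: (direct_sum_component_unique Np Kb' Na Kb (esym eq_ab)).
have [_ ND NZ] := HN; have [_ KD KZ] := HK.
exists p; split; last 2 first.
- by move=> x; have [b []] := pP x.
- by move=> x Nx; apply: (p_eq x x 0); rewrite ?addr0 //; case: HK.
split=> [x y | r x].
- have [b [Npx Kb ex]] := pP x; have [b' [Npy Kb' ey]] := pP y.
  apply: (p_eq _ _ (b + b')); [exact: ND | exact: KD |].
  by rewrite {1}ex {1}ey addrACA.
- have [b [Npx Kb ex]] := pP x.
  apply: (p_eq _ _ (r *: b)); [exact: NZ | exact: KZ |].
  by rewrite {1}ex scalerDr.
Qed.

End DirectSum.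

Lemma semisimple_hom_on_extends (A : M -> Prop) (f : M -> M) :
  semisimple M -> is_submodule A -> is_hom_on A f ->
  exists g : M -> M, is_endo g /\ (forall x, A x -> g x = f x).
Proof.
move=> ssM HA [fD fZ]; have [K [HK disjAK spanAK]] := ssM A HA.
have [p [[pD pZ] Ap p_id]] := direct_summand_projection HA HK disjAK spanAK.
exists (fun x => f (p x)); split; last by move=> x Ax; rewrite p_id.
by split=> [x y | r x]; rewrite ?pD ?pZ ?fD ?fZ.
Qed.

Lemma qppi_injective_endo_retraction (h : M -> M) :
  quasi_pseudo_principally_injective M -> is_endo h -> injective h ->
  exists g : M -> M, is_endo g /\ (forall y, g (h y) = y).
Proof.
move=> qppiM hE h_inj; have [hD hZ] := hE.
pose imh x := exists y, x = h y.
have imh_h y : imh (h y) by exists y.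
have [f fP] : exists f : M -> M, forall x, imh x -> x = h (f x).
  apply: (functional_choice (fun x y => imh x -> x = h y)) => x.
  by case: (classic (imh x)) => [[y ->] | Nx]; [exists y | exists 0].
have f_h y : f (h y) = y by apply/h_inj/esym/fP.
have [g [gE g_f]] : exists g : M -> M, is_endo g /\ (forall x, imh x -> g x = f x).
  apply: qppiM.
  - have imgh : is_image h imh by move=> x; reflexivity.
    by split; [apply: (image_submodule hE imgh) | exists h].
  - split; first split.
    + by move=> _ _ [u ->] [v ->]; rewrite -hD !f_h.
    + by move=> r _ [u ->]; rewrite -hZ !f_h.
    + by move=> x y /fP ex /fP ey fxy; rewrite ex ey fxy.
by exists g; split=> // y; rewrite g_f.
Qed.

Lemma retraction_kernel_complement (h g : M -> M) (N : M -> Prop) :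
  is_endo h -> is_endo g -> (forall y, g (h y) = y) -> is_image h N ->
  complemented N.
Proof.
move=> hE gE gh imgN; rewrite /complemented; exists (fun x => g x = 0); split.
- exact: kernel_submodule.
- by move=> _ /imgN[y ->]; rewrite gh => ->; apply: endo0.
- move=> x; exists (h (g x)), (x - h (g x)); split.
  + by apply/imgN; exists (g x).
  + by rewrite gE.1 endoN // gh subrr.
  + by rewrite addrC subrK.
Qed.

End SubmoduleComplements.

Theorem proposition2p4 (R : pzRingType) (M : lmodType R^c) :
  self_similar M ->
  (quasi_pseudo_principally_injective M <-> semisimple M).
Proof.
move=> ssimM; split=> [qppiM N HN | ssM A [HA _] f [f_hom _]].
- case: (classic (exists x, N x /\ x <> 0)) => [N_neq0 | N_eq0].
    have [h [hE h_inj imgN]] := ssimM N HN N_neq0.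
    have [g [gE gh]] := qppi_injective_endo_retraction qppiM hE h_inj.
    exact: retraction_kernel_complement hE gE gh imgN.
  exact: zero_submodule_complemented.
- exact: semisimple_hom_on_extends.
Qed.
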